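(* Let \(m\) be a positive integer that is not a perfect square, let \(a,b,c\) be positive integers with \(\gcd(am,b^2-c^2m)=1\), and let \(A,B\in\mathbb Z\). If \(A\geq abm+acm-am-cm-b+1\) and \(B\geq acm+ab-a-b-c+1\), then there exist \(x,y,z,w\in\mathbb N\) with \(a\sqrt m(x+y\sqrt m)+(b+c\sqrt m)(z+w\sqrt m)=A+B\sqrt m\).
   Context: \(\mathbb N\) denotes the set of non-negative integers. *)

From Stdlib Require Import Reals ZArith Lra Lia.
Open Scope R_scope.

Definition is_perfect_square (m : Z) : Prop := exists k : Z, m = (k * k)%Z.

(* Expanding the left-hand side, the equation says A = amy + bz + cmw and
   B = ax + bw + cz.  The pair (z, w) enters through the integer matrix
   [[b, cm], [c, b]] of determinant b^2 - c^2 m, which is invertible modulo am;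
   this lets us choose z modulo am and w modulo a so that both equations have
   integer solutions x, y.  Taking the least nonnegative residues, the lower
   bounds on A and B force x and y to be nonnegative as well. *)

From Stdlib Require Import Reals ZArith Lia.
Open Scope R_scope.

Lemma sqrt_combination_expand (s a b c m x y z w : R) :
  s * s = m ->
  a * s * (x + y * s) + (b + c * s) * (z + w * s)
  = (a * m * y + b * z + c * m * w) + (a * x + b * w + c * z) * s.
Proof. intros <-; ring. Qed.

Lemma decomposition_with_reduced_remainders (a b c m A B : Z) :
  (0 < a)%Z -> (0 < m)%Z ->
  Z.gcd (a * m) (b ^ 2 - c ^ 2 * m) = 1%Z ->
  exists x y z w : Z,
    (0 <= z < a * m)%Z /\ (0 <= w < a)%Z /\
    A = (a * m * y + b * z + c * m * w)%Z /\ B = (a * x + b * w + c * z)%Z.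
Proof.
  intros ha hm hgcd.
  destruct (Z.gcd_bezout _ _ _ hgcd) as [u [v huv]].
  set (z0 := (v * (b * A - c * m * B))%Z).
  set (w0 := (v * (b * B - c * A))%Z).
  assert (hz := Z.div_mod z0 (a * m) ltac:(lia)).
  assert (hw := Z.div_mod w0 a ltac:(lia)).
  exists (B * u * m + b * (w0 / a) + c * m * (z0 / (a * m)))%Z,
         (A * u + b * (z0 / (a * m)) + c * (w0 / a))%Z,
         (z0 mod (a * m))%Z, (w0 mod a)%Z.
  repeat split; try (apply Z.mod_pos_bound; lia).
  - transitivity (A * (u * (a * m) + v * (b ^ 2 - c ^ 2 * m)))%Z;
      [rewrite huv; ring |].
    rewrite (Z.mod_eq z0), (Z.mod_eq w0) by lia; unfold z0, w0; ring.
  - transitivity (B * (u * (a * m) + v * (b ^ 2 - c ^ 2 * m)))%Z;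
      [rewrite huv; ring |].
    rewrite (Z.mod_eq z0), (Z.mod_eq w0) by lia; unfold z0, w0; ring.
Qed.

Lemma nonneg_of_bounded_remainders (d p q r s R S y N : Z) :
  (0 < d)%Z -> (0 <= p)%Z -> (0 <= q)%Z ->
  (0 <= r < R)%Z -> (0 <= s < S)%Z ->
  N = (d * y + p * r + q * s)%Z ->
  (N >= p * (R - 1) + q * (S - 1) - d + 1)%Z ->
  (0 <= y)%Z.
Proof.
  intros hd hp hq hr hs hN hlow.
  assert (hpr : (p * r <= p * (R - 1))%Z) by (apply Z.mul_le_mono_nonneg_l; lia).
  assert (hqs : (q * s <= q * (S - 1))%Z) by (apply Z.mul_le_mono_nonneg_l; lia).
  nia.
Qed.

Theorem theorem3 (m a b c A B : Z)
  (hm : (0 < m)%Z) (hmsq : ~ is_perfect_square m)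
  (ha : (0 < a)%Z) (hb : (0 < b)%Z) (hc : (0 < c)%Z)
  (hgcd : Z.gcd (a * m) (b ^ 2 - c ^ 2 * m) = 1%Z)
  (hA : (A >= a * b * m + a * c * m - a * m - c * m - b + 1)%Z)
  (hB : (B >= a * c * m + a * b - a - b - c + 1)%Z) :
  exists x y z w : nat,
    IZR a * sqrt (IZR m) * (INR x + INR y * sqrt (IZR m))
    + (IZR b + IZR c * sqrt (IZR m)) * (INR z + INR w * sqrt (IZR m))
    = IZR A + IZR B * sqrt (IZR m).
Proof.
  destruct (decomposition_with_reduced_remainders a b c m A B ha hm hgcd)
    as (x & y & z & w & hz & hw & hAeq & hBeq).
  assert (hy : (0 <= y)%Z).
  { apply (nonneg_of_bounded_remainders (a * m) b (c * m) z w (a * m) a y A);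
      try lia. }
  assert (hx : (0 <= x)%Z).
  { apply (nonneg_of_bounded_remainders a b c w z a (a * m) x B); try lia. }
  exists (Z.to_nat x), (Z.to_nat y), (Z.to_nat z), (Z.to_nat w).
  rewrite !INR_IZR_INZ, !Z2Nat.id by lia.
  rewrite (sqrt_combination_expand _ _ _ _ (IZR m)) by (apply sqrt_sqrt, IZR_le; lia).
  rewrite hAeq, hBeq, !plus_IZR, !mult_IZR; reflexivity.
Qed.
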